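(* Let $n,q$ be positive integers. For any $\kappa_1,\kappa_2\in\{0,1,\ldots,q-1\}^n$ with $\kappa_1\neq\kappa_2$, there exists a word $w\in\{x,y\}^*$ such that $f(g(\kappa_1)w)=0$ and $f(g(\kappa_2)w)\neq 0$.
   Context: Fix positive integers $n,q$. Define $f:\{x,y\}^*\to\{0,1,\ldots,q-1\}$ as follows: for $w\in\{x,y\}^*$, if $w$ has at most $n$ occurrences of the letter $x$, let $w'=w$; otherwise take the $(n+1)$-st occurrence of $x$ counted from the right end of $w$, erase it and everything to its left, and let $w'$ be the remaining word. Then $f(w)$ is the number of occurrences of $y$ in $w'$, taken modulo $q$. Define $g:\{0,1,\ldots,q-1\}^n\to\{x,y\}^*$ by $g(i_1,i_2,\ldots,i_n)=x y^{i_1} x y^{i_2}\cdots x y^{i_n}$. *)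

From HB Require Import structures.
From mathcomp Require Import all_boot.
Set Implicit Arguments. Unset Strict Implicit. Unset Printing Implicit Defensive.

Inductive letter := lx | ly.
Definition letter_eqb (a b : letter) : bool :=
  match a, b with lx, lx | ly, ly => true | _, _ => false end.
Lemma letter_eqP : Equality.axiom letter_eqb.
Proof. by case; case; constructor. Qed.
HB.instance Definition _ := hasDecEq.Build letter letter_eqP.

Definition word := seq letter.

Fixpoint keep_right (k : nat) (s : word) : word :=
  match s with
  | [::] => [::]
  | lx :: s' => if k is k'.+1 then lx :: keep_right k' s' else [::]
  | ly :: s' => ly :: keep_right k s'
  end.

(* w' : if w has at most n x's, w itself; otherwise the part of w strictly to
   the right of the (n+1)-st occurrence of x counted from the right end. *)
Definition wprime (n : nat) (w : word) : word := rev (keep_right n (rev w)).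

Definition f (n q : nat) (w : word) : nat := count_mem ly (wprime n w) %% q.

Definition g (n q : nat) (k : n.-tuple 'I_q) : word :=
  flatten [seq lx :: nseq (nat_of_ord i) ly | i <- k].

(* Take w = x^m y^r with m <= n.  The (n+1)-st x of g(k) w from the right is
   then the (n+1-m)-th x of g(k) from the right, so f(g(k) w) is r plus the
   sum of the last n+1-m entries of k, modulo q.  Choose m so that the cut
   falls just before the rightmost entry where k1 and k2 differ: the two sums
   then differ by k1_j - k2_j, a nonzero residue mod q, and r is chosen to
   make the k1-sum vanish. *)
From mathcomp Require Import all_boot.

Set Implicit Arguments.
Unset Strict Implicit.
Unset Printing Implicit Defensive.

Definition y_blocks (l : seq nat) : word := flatten [seq nseq i ly ++ [:: lx] | i <- l].

Lemma keep_right_nseq_y t r s :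
  keep_right t (nseq r ly ++ s) = nseq r ly ++ keep_right t s.
Proof. by elim: r => //= r ->. Qed.

Lemma keep_right_nseq_x t m s : m <= t ->
  keep_right t (nseq m lx ++ s) = nseq m lx ++ keep_right (t - m) s.
Proof. by elim: m t => [|m IH] [|t] //= lemt; rewrite ?subn0 ?IH. Qed.

Lemma count_keep_right_y_blocks t l :
  count_mem ly (keep_right t (y_blocks l)) = sumn (take t.+1 l).
Proof.
elim: l t => [|i l IH] [|t] //=;
  rewrite /y_blocks /= -catA keep_right_nseq_y count_cat count_nseq /= mul1n.
- by rewrite take0 addn0.
- by rewrite -IH.
Qed.

Lemma rev_g n q (k : n.-tuple 'I_q) : rev (g k) = y_blocks (rev (map val k)).
Proof.
rewrite /g /y_blocks; elim: (tval k) => [|i s IH] //=.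
by rewrite rev_cons rev_cat IH rev_cons map_rcons flatten_rcons rev_nseq -cats1 catA.
Qed.

Lemma f_g_xy n q (k : n.-tuple 'I_q) m r : m <= n ->
  f n q (g k ++ nseq m lx ++ nseq r ly)
  = (r + sumn (take (n - m).+1 (rev (map val k)))) %% q.
Proof.
move=> lemn; rewrite /f /wprime !rev_cat !rev_nseq -catA.
rewrite keep_right_nseq_y keep_right_nseq_x // rev_g count_rev !count_cat !count_nseq.
by rewrite count_keep_right_y_blocks mul1n mul0n.
Qed.

Lemma first_mismatch (T : eqType) (x0 : T) (a b : seq T) :
  size a = size b -> a != b ->
  exists p, [/\ p < size a, take p a = take p b & nth x0 a p != nth x0 b p].
Proof.
elim: a b => [|x a IH] [|y b] //= [eq_size].
have [<-|neq_xy _] := eqVneq x y; last by exists 0; rewrite !take0.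
rewrite eqseq_cons eqxx => /(IH b eq_size)[p [lt_p eq_take neq_nth]].
by exists p.+1; rewrite /= eq_take.
Qed.

Lemma nth_rev_tuple_lt n q (k : n.-tuple 'I_q) i :
  i < n -> nth 0 (rev (map val k)) i < q.
Proof.
move=> lt_in; have : nth 0 (rev (map val k)) i \in rev (map val k).
  by rewrite mem_nth // size_rev size_map size_tuple.
by rewrite mem_rev => /mapP [j _ ->]; apply: ltn_ord.
Qed.

Lemma modn_complement q c : 0 < q -> (q - c %% q + c) %% q = 0.
Proof. by move=> q_gt0; rewrite -modnDmr subnK ?modnn // ltnW ?ltn_pmod. Qed.

Lemma eq_modDl_small q a x1 x2 : x1 < q -> x2 < q ->
  a + x1 = a + x2 %[mod q] -> x1 = x2.
Proof. by move=> lt1 lt2 /eqP; rewrite eqn_modDl !modn_small // => /eqP. Qed.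

Theorem lemma3 (n q : nat) (hn : 0 < n) (hq : 0 < q)
  (k1 k2 : n.-tuple 'I_q) :
  k1 != k2 ->
  exists w : word, f n q (g k1 ++ w) = 0 /\ f n q (g k2 ++ w) != 0.
Proof.
move=> neq_k.
have size_s (k : n.-tuple 'I_q) : size (rev (map val k)) = n.
  by rewrite size_rev size_map size_tuple.
have neq_s : rev (map val k1) != rev (map val k2).
  by apply: contraNneq neq_k => /(congr1 rev); rewrite !revK => /(inj_map val_inj)/val_inj ->.
have [p [lt_p eq_take neq_nth]] :=
  first_mismatch 0 (etrans (size_s k1) (esym (size_s k2))) neq_s.
rewrite size_s in lt_p.
set c := sumn (take p.+1 (rev (map val k1))).
exists (nseq (n - p) lx ++ nseq (q - c %% q) ly).
have le_np : n - p <= n by exact: leq_subr.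
rewrite !(f_g_xy _ _ le_np) subKn 1?ltnW // modn_complement //; split => //.
rewrite (take_nth 0) ?size_s // sumn_rcons -eq_take addnA.
apply: contra neq_nth => /eqP sum2_eq0; apply/eqP.
apply: (@eq_modDl_small q (q - c %% q + sumn (take p (rev (map val k1)))));
  rewrite ?nth_rev_tuple_lt //.
by rewrite sum2_eq0 -addnA -sumn_rcons -take_nth ?size_s // modn_complement.
Qed.
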